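(* In the Setting below, no test $S\in\mathcal{T}\setminus\mathcal{F}$ is simultaneously a $C_i$-test and a $C_j$-test for two distinct indices $i\neq j$.
   Context: A test $T$ on $[n]$ separates $i\neq j$ if $|\{i,j\}\cap T|=1$. The classes induced by a collection $\mathcal{T}'$ of tests are the equivalence classes of the relation ''$i,j$ are not separated by any test of $\mathcal{T}'$''. Setting: $\mathcal{T}$ is a collection of distinct tests on $[n]$ that is a test cover (separates every pair of distinct items), and $\mathcal{F}\subseteq\mathcal{T}$ has the property that for every $T\in\mathcal{T}\setminus\mathcal{F}$, $\mathcal{F}\cup\{T\}$ induces at most one more class than $\mathcal{F}$, and for every two tests $T,T'\in\mathcal{T}\setminus\mathcal{F}$, $\mathcal{F}\cup\{T,T'\}$ induces at most two more classes than $\mathcal{F}$. Let $C_1,\dots,C_l$ be the classes induced by $\mathcal{F}$. For $C\subseteq[n]$, a test $S\in\mathcal{T}$ is a $C$-test if $S\cap C\neq\emptyset$ and $C\setminus S\neq\emptyset$. *)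

From mathcomp Require Import all_boot.
Set Implicit Arguments. Unset Strict Implicit. Unset Printing Implicit Defensive.

(* Items are 'I_n; a test is a subset of 'I_n; a collection of (distinct)
   tests is a {set {set 'I_n}}. *)

Definition separates n (S : {set 'I_n}) (i j : 'I_n) : bool :=
  (i \in S) != (j \in S).

Definition unseparated n (Tc : {set {set 'I_n}}) (i j : 'I_n) : bool :=
  [forall S in Tc, ~~ separates S i j].

Definition classes n (Tc : {set {set 'I_n}}) : {set {set 'I_n}} :=
  [set [set j | unseparated Tc i j] | i : 'I_n].

Definition test_cover n (Tc : {set {set 'I_n}}) : Prop :=
  forall i j : 'I_n, i != j -> exists2 S, S \in Tc & separates S i j.

Definition C_test n (C S : {set 'I_n}) : bool :=
  (S :&: C != set0) && (C :\: S != set0).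

From mathcomp Require Import all_boot.
Set Implicit Arguments. Unset Strict Implicit.

(* Suppose a test S outside F splits two distinct classes Ci and
   Cj of F.  Every class of S |: F lies inside a class of F, so "the class of F
   containing D" is a map from classes (S |: F) onto classes F.  Both Ci and Cj
   have at least two preimages under this map (the parts inside and outside S),
   and a surjection in which two distinct points have two preimages each forces
   the domain to be larger by at least two.  Hence S |: F induces at least two
   more classes than F, contradicting the hypothesis that adding one test
   creates at most one new class. *)

Lemma card_imset_two_fibres (aT rT : finType) (f : aT -> rT) (A : {set aT})
    (x1 x2 y1 y2 : aT) :
  x1 \in A -> x2 \in A -> y1 \in A -> y2 \in A ->
  x1 != x2 -> y1 != y2 -> f x1 = f x2 -> f y1 = f y2 -> f x1 != f y1 ->
  #|f @: A| + 2 <= #|A|.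
Proof.
move=> Ax1 Ax2 Ay1 Ay2 x12 y12 fx fy fxy.
have x2y2 : x2 != y2 by apply: contraNneq fxy => e; rewrite fx fy e.
have x1y2 : x1 != y2 by apply: contraNneq fxy => ->; rewrite fy.
have y1x2 : y1 != x2 by apply: contraNneq fxy => ->; rewrite -fx.
set B := A :\: [set x2; y2].
have sub2 : [set x2; y2] \subset A by apply/subsetP=> z; rewrite !inE => /orP[]/eqP->.
have card2 : #|[set x2; y2]| = 2 by rewrite cards2 x2y2.
have cardB : #|B| + 2 = #|A|.
  by rewrite cardsD (setIidPr sub2) card2 subnK // -card2 subset_leq_card.
have imB : f @: A \subset f @: B.
  apply/subsetP=> _ /imsetP[z Az ->].
  have [z2|] := boolP (z \in [set x2; y2]); last by move=> zB; apply: imset_f; rewrite inE zB.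
  move: z2; rewrite !inE => /orP[]/eqP->.
    by rewrite -fx imset_f // !inE negb_or x12 x1y2.
  by rewrite -fy imset_f // !inE negb_or y1x2 y12.
by rewrite -cardB leq_add2r (leq_trans (subset_leq_card imB)) ?leq_imset_card.
Qed.

Section Classes.
Variable n : nat.
Implicit Types (Tc : {set {set 'I_n}}) (S C : {set 'I_n}) (i j k : 'I_n).

Definition cl Tc i : {set 'I_n} := [set j | unseparated Tc i j].

Lemma unseparatedP Tc i j :
  reflect (forall S, S \in Tc -> (i \in S) = (j \in S)) (unseparated Tc i j).
Proof.
apply: (iffP forall_inP) => H S /H; rewrite /separates; first by move/negbNE/eqP.
by move=> ->; rewrite eqxx.
Qed.

Lemma unseparated_refl Tc i : unseparated Tc i i.
Proof. by apply/unseparatedP. Qed.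

Lemma unseparated_trans Tc i j k :
  unseparated Tc i j -> unseparated Tc j k -> unseparated Tc i k.
Proof. by move=> /unseparatedP ij /unseparatedP jk; apply/unseparatedP=> S HS; rewrite ij ?jk. Qed.

Lemma unseparated_sym Tc i j : unseparated Tc i j -> unseparated Tc j i.
Proof. by move/unseparatedP=> ij; apply/unseparatedP=> S /ij ->. Qed.

Lemma unseparated_sub Tc Tc' i j :
  Tc \subset Tc' -> unseparated Tc' i j -> unseparated Tc i j.
Proof. by move=> /subsetP sub /unseparatedP ij; apply/unseparatedP=> S /sub/ij. Qed.

Lemma eq_cl Tc i j : (cl Tc i == cl Tc j) = unseparated Tc i j.
Proof.
apply/eqP/idP=> [e | ij].
  have : j \in cl Tc j by rewrite inE unseparated_refl.
  by rewrite -e inE.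
apply/setP=> k; rewrite !inE; apply/idP/idP.
  exact: unseparated_trans (unseparated_sym ij).
exact: unseparated_trans ij.
Qed.

Lemma class_of_mem Tc C i : C \in classes Tc -> i \in C -> C = cl Tc i.
Proof. by move=> /imsetP[c _ ->]; rewrite inE => ci; apply/eqP; rewrite eq_cl. Qed.

Lemma cl_setU1_neq Tc S i j : i \in S -> j \notin S -> cl (S |: Tc) i != cl (S |: Tc) j.
Proof.
move=> iS jS; rewrite eq_cl; apply/unseparatedP => /(_ S (setU11 _ _)).
by rewrite iS (negbTE jS).
Qed.

(* The class of Tc containing a set D of items (meaningful when D lies inside
   one class of Tc, e.g. when D is a class of a larger collection). *)
Definition coarsen Tc (D : {set 'I_n}) : {set 'I_n} := [set j | [exists i in D, unseparated Tc i j]].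

Lemma coarsen_cl Tc Tc' i : Tc \subset Tc' -> coarsen Tc (cl Tc' i) = cl Tc i.
Proof.
move=> sub; apply/setP=> j; rewrite !inE; apply/existsP/idP=> [[k /andP[]]|ij].
  by rewrite inE => /(unseparated_sub sub) ik; apply: unseparated_trans.
by exists i; rewrite inE unseparated_refl.
Qed.

Lemma classes_coarsen Tc Tc' :
  Tc \subset Tc' -> classes Tc = coarsen Tc @: classes Tc'.
Proof.
by move=> sub; rewrite /classes -imset_comp; apply: eq_imset => i /=; rewrite coarsen_cl.
Qed.

Lemma card_classes_split_two Tc S Ci Cj :
  Ci \in classes Tc -> Cj \in classes Tc -> Ci != Cj ->
  C_test Ci S -> C_test Cj S -> #|classes Tc| + 2 <= #|classes (S |: Tc)|.
Proof.
move=> Ti Tj ij /andP[/set0Pn[i1 +] /set0Pn[i2 +]] /andP[/set0Pn[j1 +] /set0Pn[j2 +]].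
rewrite !inE => /andP[i1S i1C] /andP[i2S i2C] /andP[j1S j1C] /andP[j2S j2C].
have sub : Tc \subset S |: Tc by apply: subsetUr.
(* i1, i2 give two coarsening-preimages of Ci, and j1, j2 two of Cj. *)
rewrite (classes_coarsen sub).
apply: (@card_imset_two_fibres _ _ _ _ (cl (S |: Tc) i1) (cl (S |: Tc) i2)
                                       (cl (S |: Tc) j1) (cl (S |: Tc) j2));
  rewrite ?imset_f ?cl_setU1_neq ?coarsen_cl //.
- by rewrite -(class_of_mem Ti i1C) -(class_of_mem Ti i2C).
- by rewrite -(class_of_mem Tj j1C) -(class_of_mem Tj j2C).
by rewrite -(class_of_mem Ti i1C) -(class_of_mem Tj j1C).
Qed.

End Classes.

Theorem mainTheorem9 (n : nat) (T F : {set {set 'I_n}}) :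
  test_cover T ->
  F \subset T ->
  (forall S, S \in T :\: F -> #|classes (S |: F)| <= #|classes F| + 1) ->
  (forall S S', S \in T :\: F -> S' \in T :\: F -> S != S' ->
     #|classes (S |: (S' |: F))| <= #|classes F| + 2) ->
  forall S, S \in T :\: F ->
  forall Ci Cj, Ci \in classes F -> Cj \in classes F -> Ci != Cj ->
  ~ (C_test Ci S && C_test Cj S).
Proof.
move=> _ _ one_new _ S TS Ci Cj Fi Fj ij /andP[Si Sj].
have := leq_trans (card_classes_split_two Fi Fj ij Si Sj) (one_new S TS).
by rewrite leq_add2l.
Qed.
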